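(* Let $G$ be a $\lambda$-graph and $Q$ a query over $G$. Then $Q^{\Downarrow}$ is an open bisimulation if and only if $[n]=[m]$ for all nodes $n,m$ with $n\,Q\,m$.
   Context: A pre-$\lambda$-graph is a directed graph whose nodes are of four kinds: an application node $@(n_1,n_2)$ has exactly two children, its left child $n_1$ and its right child $n_2$; an abstraction node $\lambda(n)$ has exactly one child, its body $n$; a free variable node has no children and carries an atom $\mathrm{id}(n)$ from a fixed set of atoms, distinct free variable nodes carrying distinct atoms; a bound variable node $\mathrm{var}(l)$ has exactly one outgoing binding edge, to an abstraction node $l$ (its binder). Letters $l,l'$ denote abstraction nodes. A trace is a finite sequence of directions from $\{\swarrow,\downarrow,\searrow\}$; $\epsilon$ is the empty trace and $d\cdot\tau$ is the trace $\tau$ extended by one final step $d$. Paths $n\xrightarrow{\tau}m$ are defined inductively: $n\xrightarrow{\epsilon}n$; if $n\xrightarrow{\tau}\lambda(m)$ then $n\xrightarrow{\downarrow\cdot\tau}m$; if $n\xrightarrow{\tau}@(m_1,m_2)$ then $n\xrightarrow{\swarrow\cdot\tau}m_1$ and $n\xrightarrow{\searrow\cdot\tau}m_2$ (binding edges are never followed). We write $n\xrightarrow{\tau}$ if $n\xrightarrow{\tau}m$ for some $m$. The path $n\xrightarrow{\tau}$ crosses a node $m$ if either $n\xrightarrow{\tau}m$, or $\tau=d\cdot\tau'$ and $n\xrightarrow{\tau'}$ crosses $m$. A root is a node $r$ such that the only path ending in $r$ has the empty trace. A node $m$ dominates $n$ if every path from a root to $n$ crosses $m$. A $\lambda$-graph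 is a pre-$\lambda$-graph that has finitely many nodes, is acyclic ($n\xrightarrow{\tau}n$ holds only for $\tau=\epsilon$), and is dominated (every bound variable node $\mathrm{var}(l)$ is dominated by its binder $l$). Two nodes are homogeneous if both are application nodes, or both abstraction nodes, or both free variable nodes, or both bound variable nodes; a binary relation $R$ on nodes is homogeneous if it only relates homogeneous nodes. Rules: $(\swarrow)$: $@(n_1,n_2)\,R\,@(m_1,m_2)$ implies $n_1\,R\,m_1$; $(\searrow)$: $@(n_1,n_2)\,R\,@(m_1,m_2)$ implies $n_2\,R\,m_2$; $(\downarrow)$: $\lambda(n)\,R\,\lambda(m)$ implies $n\,R\,m$; $(\circlearrowright)$: $\mathrm{var}(n)\,R\,\mathrm{var}(m)$ implies $n\,R\,m$. $R$ is propagated if closed under $(\swarrow),(\downarrow),(\searrow)$. $R$ is open if $n\,R\,m$ implies $n=m$ for all free variable nodes $n,m$. A bisimulation is a homogeneous propagated relation closed also under $(\circlearrowright)$. $R^{\Downarrow}$ (propagation) is the smallest propagated relation containing $R$. A query over $G$ is a binary relation on the roots of $G$. Readback. Locally nameless terms: $t::=\underline{k}\mid \mathsf{x}\mid t\,s\mid \lambda.t$ with $k\in\mathbb N$ (bound variable as de Bruijn index) and $\mathsf{x}$ an atom (free variable); equality is syntactic. For a path $n\xrightarrow{\tau}$ crossing an abstraction node $l$, the index $\mathrm{idx}(l,n\xrightarrow{\tau})$ is defined by induction on the crossing: it is $0$ if $n\xrightarrow{\tau}l$; for $n\xrightarrow{d\cdot\tau}l'$ with $l'$ an abstraction node different from $l$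 it is $\mathrm{idx}(l,n\xrightarrow{\tau})+1$; for $n\xrightarrow{d\cdot\tau}m$ with $m$ not an abstraction node it is $\mathrm{idx}(l,n\xrightarrow{\tau})$. For a root $r$ and a path $r\xrightarrow{\tau}n$, the readback $[r\xrightarrow{\tau}n]$ is: $\underline{\mathrm{idx}(l,r\xrightarrow{\tau})}$ if $n=\mathrm{var}(l)$ (well defined by domination); $\mathrm{id}(n)$ if $n$ is a free variable node; $\lambda.[r\xrightarrow{\downarrow\cdot\tau}m]$ if $n=\lambda(m)$; $[r\xrightarrow{\swarrow\cdot\tau}n_1]\,[r\xrightarrow{\searrow\cdot\tau}n_2]$ if $n=@(n_1,n_2)$. For a root $r$, $[r]:=[r\xrightarrow{\epsilon}r]$. *)

From Stdlib Require Import List.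
Import ListNotations.
Set Implicit Arguments.

Section LambdaGraphs.
Variables (A : Type) (V : Type).

Inductive node : Type :=
  | App (n1 n2 : V)
  | Abs (n : V)
  | FVar (a : A)
  | BVar (l : V).

Variable G : V -> node.

Definition pre_lambda_graph : Prop :=
  (forall n m a, G n = FVar a -> G m = FVar a -> n = m) /\
  (forall v l, G v = BVar l -> exists b, G l = Abs b).

Inductive dir : Type := DL | DD | DR .

(* A trace d . tau is represented as the list d :: tau (head = last step). *)
Definition trace := list dir.

Inductive path : V -> trace -> V -> Prop :=
  | path_nil n : path n [] n
  | path_abs n tau m b : path n tau m -> G m = Abs b -> path n (DD :: tau) b
  | path_appl n tau m m1 m2 : path n tau m -> G m = App m1 m2 -> path n (DL :: tau) m1
  | path_appr n tau m m1 m2 : path n tau m -> G m = App m1 m2 -> path n (DR :: tau) m2.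

Fixpoint crosses (n : V) (tau : trace) (m : V) : Prop :=
  path n tau m \/ match tau with [] => False | _ :: tau' => crosses n tau' m end.

Definition is_root (r : V) : Prop := forall n tau, path n tau r -> tau = [].

Definition dominates (m n : V) : Prop :=
  forall r tau, is_root r -> path r tau n -> crosses r tau m.

Definition finite_nodes : Prop := exists l : list V, forall v, In v l.
Definition acyclic : Prop := forall n tau, path n tau n -> tau = [].
Definition dominated : Prop := forall v l, G v = BVar l -> dominates l v.

Definition lambda_graph : Prop :=
  pre_lambda_graph /\ finite_nodes /\ acyclic /\ dominated.

Definition homogeneous_nodes (n m : V) : Prop :=
  match G n, G m with
  | App _ _, App _ _ | Abs _, Abs _ | FVar _, FVar _ | BVar _, BVar _ => True
  | _, _ => False
  end.

Definition homogeneous (R : V -> V -> Prop) : Prop :=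
  forall n m, R n m -> homogeneous_nodes n m.

Definition propagated (R : V -> V -> Prop) : Prop :=
  (forall n m n1 n2 m1 m2, R n m -> G n = App n1 n2 -> G m = App m1 m2 -> R n1 m1) /\
  (forall n m n1 n2 m1 m2, R n m -> G n = App n1 n2 -> G m = App m1 m2 -> R n2 m2) /\
  (forall n m b c, R n m -> G n = Abs b -> G m = Abs c -> R b c).

Definition var_closed (R : V -> V -> Prop) : Prop :=
  forall n m l l', R n m -> G n = BVar l -> G m = BVar l' -> R l l'.

Definition open_rel (R : V -> V -> Prop) : Prop :=
  forall n m a b, G n = FVar a -> G m = FVar b -> R n m -> n = m.

Definition bisimulation (R : V -> V -> Prop) : Prop :=
  homogeneous R /\ propagated R /\ var_closed R.

Definition open_bisimulation (R : V -> V -> Prop) : Prop :=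
  open_rel R /\ bisimulation R.

(* R^Downarrow: smallest propagated relation containing R *)
Inductive propagation (R : V -> V -> Prop) : V -> V -> Prop :=
  | prop_base n m : R n m -> propagation R n m
  | prop_l n m n1 n2 m1 m2 : propagation R n m -> G n = App n1 n2 -> G m = App m1 m2 ->
      propagation R n1 m1
  | prop_r n m n1 n2 m1 m2 : propagation R n m -> G n = App n1 n2 -> G m = App m1 m2 ->
      propagation R n2 m2
  | prop_abs n m b c : propagation R n m -> G n = Abs b -> G m = Abs c ->
      propagation R b c.

Definition query (Q : V -> V -> Prop) : Prop :=
  forall n m, Q n m -> is_root n /\ is_root m.

Inductive term : Type :=
  | Idx (k : nat)
  | Fv (a : A)
  | TApp (t s : term)
  | Lam (t : term).

Inductive idx (l : V) (n : V) : trace -> nat -> Prop :=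
  | idx_here tau : path n tau l -> idx l n tau 0
  | idx_abs d tau l' b k : path n (d :: tau) l' -> G l' = Abs b -> l' <> l ->
      idx l n tau k -> idx l n (d :: tau) (S k)
  | idx_other d tau m k : path n (d :: tau) m -> (forall b, G m <> Abs b) ->
      idx l n tau k -> idx l n (d :: tau) k.

Inductive readback_path (r : V) : trace -> V -> term -> Prop :=
  | rb_var tau n l k : G n = BVar l -> idx l r tau k -> readback_path r tau n (Idx k)
  | rb_fv tau n a : G n = FVar a -> readback_path r tau n (Fv a)
  | rb_abs tau n b t : G n = Abs b -> readback_path r (DD :: tau) b t ->
      readback_path r tau n (Lam t)
  | rb_app tau n n1 n2 t1 t2 : G n = App n1 n2 ->
      readback_path r (DL :: tau) n1 t1 -> readback_path r (DR :: tau) n2 t2 ->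
      readback_path r tau n (TApp t1 t2).

Definition readback (r : V) (t : term) : Prop := readback_path r [] r t.

End LambdaGraphs.

(* Readback along a trace only depends on the kinds of the nodes crossed, on free-variable atoms
   and on the depth of binders.  Paths with the same trace from Q-related roots end in nodes
   related by Q^⇓.  If Q^⇓ is an open bisimulation, such nodes have equal kinds and atoms; for
   bound variables, domination places both binders on the common trace, and they lie at the same
   depth: otherwise some binder l would reach, by a nonempty path eps, a node z with l and z
   related to the same node, so every trace walkable from l is walkable from z and eps could be
   iterated beyond the length bound of a finite acyclic graph.  Conversely, if Q-related roots
   have equal readbacks, every pair of Q^⇓ is reached along a common trace with equal readbacks,
   which forces equal kinds, equal atoms and binders reached along a common trace. *)

From Stdlib Require Import List Classical Lia.
Import ListNotations.
Set Implicit Arguments.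
Unset Strict Implicit.

Section LambdaGraphTheory.
Context {A V : Type} (G : V -> node A V).

Definition edge (m : V) (d : dir) (e : V) : Prop :=
  match d with
  | DD => G m = Abs A e
  | DL => exists m2, G m = App A e m2
  | DR => exists m1, G m = App A m1 e
  end.

Definition is_abs (x : V) : Prop := exists b, G x = Abs A b.

Lemma path_cons a t m d e : path G a t m -> edge m d e -> path G a (d :: t) e.
Proof.
  destruct d; simpl; intros Hp He.
  - destruct He as [m2 He]. eapply path_appl; eauto.
  - eapply path_abs; eauto.
  - destruct He as [m1 He]. eapply path_appr; eauto.
Qed.

Lemma path_cons_inv a d t e : path G a (d :: t) e -> exists m, path G a t m /\ edge m d e.
Proof. intros H. inversion H; subst; eexists; split; eauto; simpl; eauto. Qed.

Lemma path_functional a t e1 e2 : path G a t e1 -> path G a t e2 -> e1 = e2.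
Proof.
  revert e1 e2; induction t as [|d t IH]; intros e1 e2 H1 H2.
  - inversion H1; inversion H2; congruence.
  - apply path_cons_inv in H1 as [m1 [P1 E1]]. apply path_cons_inv in H2 as [m2 [P2 E2]].
    rewrite (IH _ _ P1 P2) in E1.
    destruct d; simpl in *; [destruct E1, E2 | | destruct E1, E2]; congruence.
Qed.

Lemma path_cat m eps e a s : path G m eps e -> path G a s m -> path G a (eps ++ s) e.
Proof.
  induction 1; intros Hs; simpl; [exact Hs | | |].
  - eapply path_abs; eauto.
  - eapply path_appl; eauto.
  - eapply path_appr; eauto.
Qed.

Lemma path_cat_inv eps s a e :
  path G a (eps ++ s) e -> exists m, path G a s m /\ path G m eps e.
Proof.
  revert e; induction eps as [|d eps IH]; simpl; intros e H.
  - exists e; split; [exact H | constructor].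
  - apply path_cons_inv in H as [m0 [Hp He]].
    destruct (IH _ Hp) as [m [H1 H2]].
    exists m; split; [exact H1 | eapply path_cons; eauto].
Qed.

Lemma is_abs_next_step a d t e x :
  path G a (d :: t) e -> path G a t x -> (is_abs x <-> d = DD).
Proof.
  intros H Hx. apply path_cons_inv in H as [m [Hp He]].
  rewrite (path_functional Hp Hx) in He.
  unfold is_abs; destruct d; simpl in He; split; intro HH; try discriminate; eauto;
    destruct He, HH; congruence.
Qed.

Lemma path_suffix_unique (Hac : acyclic G) a l s0 s e e' :
  path G a s0 l -> path G a s l -> e ++ s0 = e' ++ s -> s = s0.
Proof.
  intros H0 H1 He. destruct (app_eq_app _ _ _ _ He) as [l0 [[_ E] | [_ E]]]; subst.
  - apply path_cat_inv in H1 as [m [Hm Hl]].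
    rewrite (path_functional Hm H0) in Hl. now rewrite (Hac _ _ Hl).
  - apply path_cat_inv in H0 as [m [Hm Hl]].
    rewrite (path_functional Hm H1) in Hl. now rewrite (Hac _ _ Hl).
Qed.

Definition bounded_paths (N : nat) : Prop :=
  forall a t e, path G a t e -> length t < N.

(* The nodes crossed by an acyclic path are pairwise distinct. *)
Lemma acyclic_bounded_paths (Hac : acyclic G) (nodes : list V) :
  (forall v, In v nodes) -> bounded_paths (length nodes).
Proof.
  intros Hnodes a t.
  assert (Hcrossed : forall e, path G a t e -> exists vs, length vs = S (length t) /\
            NoDup vs /\ forall v, In v vs -> exists eps, path G v eps e).
  { induction t as [|d t IH]; intros e H.
    - exists [e]. repeat split.
      + constructor; [intros [] | constructor].
      + intros v [<- | []]. exists []; constructor.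
    - apply path_cons_inv in H as [m [Hp He]].
      destruct (IH _ Hp) as [vs [Hlen [Hnd Hin]]].
      exists (e :: vs). repeat split; [simpl; lia | constructor; [|exact Hnd] |].
      + intros Hev. destruct (Hin _ Hev) as [eps Heps].
        discriminate (Hac _ _ (path_cons Heps He)).
      + intros v [<- | Hv]; [exists []; constructor |].
        destruct (Hin _ Hv) as [eps Heps]. exists (d :: eps). eapply path_cons; eauto. }
  intros e H. destruct (Hcrossed _ H) as [vs [Hlen [Hnd _]]].
  pose proof (NoDup_incl_length Hnd (l' := nodes) (fun v _ => Hnodes v)). lia.
Qed.

Fixpoint trace_pow (eps : trace) (j : nat) : trace :=
  match j with 0 => [] | S j => trace_pow eps j ++ eps end.

Lemma no_pumping N (HN : bounded_paths N) a c eps :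
  path G a eps c -> eps <> [] ->
  ~ (forall d, (exists e, path G a d e) -> exists e, path G c d e).
Proof.
  intros Hac Hne Hwalk.
  assert (Hpow : forall j, exists e, path G a (trace_pow eps j) e).
  { induction j as [|j IH]; simpl; [exists a; constructor |].
    destruct (Hwalk _ IH) as [e He]. exists e. eapply path_cat; eauto. }
  assert (Hlen : forall j, j <= length (trace_pow eps j)).
  { induction j; simpl; [lia |]. rewrite length_app. destruct eps; [congruence | simpl; lia]. }
  destruct (Hpow N) as [e He]. specialize (HN _ _ _ He). specialize (Hlen N). lia.
Qed.

Lemma homogeneous_nodes_sym x y : homogeneous_nodes G x y -> homogeneous_nodes G y x.
Proof. unfold homogeneous_nodes; destruct (G x), (G y); tauto. Qed.

Lemma homogeneous_flip R : homogeneous G R -> homogeneous G (fun x y => R y x).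
Proof. intros Hh x y Hxy. exact (homogeneous_nodes_sym (Hh _ _ Hxy)). Qed.

Lemma propagated_flip R : propagated G R -> propagated G (fun x y => R y x).
Proof. intros [Hl [Hr Ha]]; repeat split; intros; eauto. Qed.

Lemma propagation_propagated Q : propagated G (propagation G Q).
Proof. repeat split; intros; [eapply prop_l | eapply prop_r | eapply prop_abs]; eauto. Qed.

Lemma homogeneous_edge x y d e :
  homogeneous_nodes G x y -> edge x d e -> exists f, edge y d f.
Proof.
  unfold homogeneous_nodes, edge; intros Hxy Hx; destruct d;
    [destruct Hx as [? Hx] | | destruct Hx as [? Hx]]; rewrite Hx in Hxy;
    destruct (G y); try contradiction; eauto.
Qed.

Lemma propagated_edge R x y d e f :
  propagated G R -> R x y -> edge x d e -> edge y d f -> R e f.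
Proof.
  intros [Hl [Hr Ha]] Hxy; destruct d; simpl;
    [intros [? Hx] [? Hy] | intros Hx Hy | intros [? Hx] [? Hy]]; eauto.
Qed.

Lemma propagated_path R x y t e :
  homogeneous G R -> propagated G R -> path G x t e -> R x y ->
  exists f, path G y t f /\ R e f.
Proof.
  intros Hh Hp Hpath; revert y; induction t as [|d t IH] in e, Hpath |- *; intros y Hxy.
  - inversion Hpath; subst. exists y; split; [constructor | exact Hxy].
  - apply path_cons_inv in Hpath as [m [Hm He]].
    destruct (IH _ Hm _ Hxy) as [f [Hf Hmf]].
    destruct (homogeneous_edge (Hh _ _ Hmf) He) as [g Hg].
    exists g; split; [eapply path_cons; eauto | eapply propagated_edge; eauto].
Qed.

Lemma propagated_same_trace R r r' t n m :
  propagated G R -> R r r' -> path G r t n -> path G r' t m -> R n m.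
Proof.
  intros Hp Hr; revert n m; induction t as [|d t IH]; intros n m Hn Hm.
  - inversion Hn; inversion Hm; subst; exact Hr.
  - apply path_cons_inv in Hn as [x [Hx Hxn]]. apply path_cons_inv in Hm as [y [Hy Hym]].
    exact (propagated_edge Hp (IH _ _ Hx Hy) Hxn Hym).
Qed.

Section BoundedBisimulation.
Variables (N : nat) (R : V -> V -> Prop).
Hypotheses (HN : bounded_paths N) (Hh : homogeneous G R) (Hp : propagated G R).

(* Every trace walkable from [l] is walkable from [l'] and then, backwards, from [z]:
   [eps] could be iterated forever. *)
Lemma no_shortcut l l' z eps : R l l' -> R z l' -> path G l eps z -> eps = [].
Proof.
  intros Hll' Hzl' Hpath. destruct eps as [|d eps]; [reflexivity | exfalso].
  apply (no_pumping HN Hpath); [discriminate |].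
  intros t [e He].
  destruct (propagated_path Hh Hp He Hll') as [f [Hf _]].
  destruct (propagated_path (homogeneous_flip Hh) (propagated_flip Hp) Hf Hzl') as [g [Hg _]].
  eauto.
Qed.

Lemma binder_not_deeper r r' s eps z l l' :
  R r r' -> path G r (eps ++ s) z -> path G r s l -> path G r' (eps ++ s) l' -> R l l' ->
  eps = [].
Proof.
  intros Hr Hz Hl Hl' Hll'.
  destruct (path_cat_inv Hz) as [m [Hm Hmz]]. rewrite (path_functional Hm Hl) in Hmz.
  exact (no_shortcut Hll' (propagated_same_trace Hp Hr Hz Hl') Hmz).
Qed.

End BoundedBisimulation.

Lemma binder_suffix_eq N R r r' t x y e1 e2 s1 s2 l l' :
  bounded_paths N -> homogeneous G R -> propagated G R -> R r r' ->
  path G r t x -> path G r' t y -> t = e1 ++ s1 -> t = e2 ++ s2 ->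
  path G r s1 l -> path G r' s2 l' -> R l l' -> s1 = s2.
Proof.
  intros HN Hh Hp Hr Hx Hy -> E Hl Hl' Hll'.
  destruct (app_eq_app _ _ _ _ E) as [l0 [[-> ->] | [-> ->]]].
  - rewrite <- app_assoc in Hx. destruct (path_cat_inv Hx) as [z [Hz _]].
    now rewrite (binder_not_deeper HN Hh Hp Hr Hz Hl Hl' Hll').
  - destruct (path_cat_inv Hy) as [w [Hw _]].
    now rewrite (binder_not_deeper HN (homogeneous_flip Hh) (propagated_flip Hp) Hr Hw Hl' Hl Hll').
Qed.

Definition same_abs (r r' : V) (t : trace) : Prop :=
  forall x y, path G r t x -> path G r' t y -> (is_abs x <-> is_abs y).

(* Below the last node of a path, being an abstraction is read off the next step. *)
Lemma same_abs_cons r r' d t e e' :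
  path G r (d :: t) e -> path G r' (d :: t) e' -> same_abs r r' t.
Proof.
  intros He He' x y Hx Hy.
  rewrite (is_abs_next_step He Hx), (is_abs_next_step He' Hy). reflexivity.
Qed.

Lemma same_abs_bvar r r' t x y l l' :
  path G r t x -> path G r' t y -> G x = BVar A l -> G y = BVar A l' -> same_abs r r' t.
Proof.
  intros Hx Hy Ex Ey x' y' Hx' Hy'.
  rewrite (path_functional Hx' Hx), (path_functional Hy' Hy).
  unfold is_abs; split; intros [b Hb]; congruence.
Qed.

Lemma crosses_suffix r t l : crosses G r t l -> exists e s, t = e ++ s /\ path G r s l.
Proof.
  induction t as [|d t IH]; simpl; intros [H | H].
  - exists [], []; auto.
  - contradiction.
  - exists [], (d :: t); auto.
  - destruct (IH H) as [e [s [-> Hs]]]. exists (d :: e), s; auto.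
Qed.

Lemma idx_exists r l t x : path G r t x -> crosses G r t l -> exists k, idx G l r t k.
Proof.
  revert x; induction t as [|d t IH]; intros x Hx Hc; simpl in Hc.
  - destruct Hc as [Hc | []]. exists 0; now constructor.
  - destruct Hc as [Hc | Hc]; [exists 0; now constructor |].
    destruct (path_cons_inv Hx) as [m [Hm _]].
    destruct (IH _ Hm Hc) as [k Hk].
    destruct (classic (x = l)) as [-> | Hne]; [exists 0; now constructor |].
    destruct (G x) eqn:Ex;
      [| exists (S k); eapply idx_abs; eauto |..];
      exists k; eapply idx_other; eauto; congruence.
Qed.

Lemma idx_transfer l l' r r' t k y :
  idx G l r t k -> path G r' t y ->
  (forall s e, t = e ++ s -> (path G r s l <-> path G r' s l')) ->
  same_abs r r' t -> idx G l' r' t k.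
Proof.
  intros Hi; revert y; induction Hi as [t Hp | d t l1 b k Hp Hb Hne Hi IH | d t m k Hp Hm Hi IH];
    intros y Hy Hpos Habs.
  - constructor. apply (Hpos t []); auto.
  - destruct (proj1 (Habs _ _ Hp Hy) (ex_intro _ b Hb)) as [c Hc].
    destruct (path_cons_inv Hy) as [y' [Hy' _]].
    eapply idx_abs; eauto.
    + intros ->. apply Hne, (path_functional Hp). apply (Hpos _ []); auto.
    + apply (IH y' Hy'); [| eapply same_abs_cons; eauto].
      intros s e ->. apply (Hpos s (d :: e)). reflexivity.
  - destruct (path_cons_inv Hy) as [y' [Hy' _]].
    eapply idx_other; eauto.
    + intros c Hc. destruct (proj2 (Habs _ _ Hp Hy) (ex_intro _ c Hc)) as [b Hb]. exact (Hm _ Hb).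
    + apply (IH y' Hy'); [| eapply same_abs_cons; eauto].
      intros s e ->. apply (Hpos s (d :: e)). reflexivity.
Qed.

Lemma idx_match l l' r r' t k :
  is_abs l -> is_abs l' -> idx G l r t k -> idx G l' r' t k -> same_abs r r' t ->
  exists s, path G r s l /\ path G r' s l'.
Proof.
  intros Hl Hl' Hi; revert Hl'.
  induction Hi as [t Hp | d t l1 b k Hp Hb Hne Hi IH | d t m k Hp Hm Hi IH];
    intros Hl' Hi' Habs; inversion Hi'; subst;
    try solve [eauto];
    try solve [apply IH; auto; eapply same_abs_cons; eauto];
    exfalso;
    match goal with
    | Habs : same_abs r r' ?t, Hx : path G r ?t ?x, Hy : path G r' ?t ?y |- _ =>
        pose proof (Habs _ _ Hx Hy) as Hiff
    end; unfold is_abs in *; firstorder.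
Qed.

Lemma readback_path_inv r t x tm : readback_path G r t x tm ->
  match G x with
  | App _ n1 n2 => exists t1 t2, tm = TApp t1 t2 /\
      readback_path G r (DL :: t) n1 t1 /\ readback_path G r (DR :: t) n2 t2
  | Abs _ b => exists t1, tm = Lam t1 /\ readback_path G r (DD :: t) b t1
  | FVar _ a => tm = Fv a
  | BVar _ l => exists k, tm = Idx A k /\ idx G l r t k
  end.
Proof. destruct 1 as [? ? ? ? E | ? ? ? E | ? ? ? ? E | ? ? ? ? ? ? E]; rewrite E; eauto. Qed.

Lemma readback_path_exists N r t x :
  bounded_paths N -> dominated G -> is_root G r -> path G r t x ->
  exists tm, readback_path G r t x tm.
Proof.
  intros HN Hdom Hr.
  enough (Hfuel : forall k t x, N - length t <= k -> path G r t x ->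
                    exists tm, readback_path G r t x tm) by eauto.
  induction k as [|k IH]; intros t' x' Hk Hp; pose proof (HN _ _ _ Hp) as Hlt; [lia |].
  destruct (G x') as [n1 n2 | b | a | l] eqn:Ex.
  - destruct (IH (DL :: t') n1) as [t1 H1]; [simpl; lia | eapply path_appl; eauto |].
    destruct (IH (DR :: t') n2) as [t2 H2]; [simpl; lia | eapply path_appr; eauto |].
    exists (TApp t1 t2); eapply rb_app; eauto.
  - destruct (IH (DD :: t') b) as [t1 H1]; [simpl; lia | eapply path_abs; eauto |].
    exists (Lam t1); eapply rb_abs; eauto.
  - exists (Fv a); eapply rb_fv; eauto.
  - destruct (idx_exists Hp (Hdom _ _ Ex _ _ Hr Hp)) as [k' Hk'].
    exists (Idx A k'); eapply rb_var; eauto.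
Qed.

Section OpenBisimulationReadback.
Variables (N : nat) (R : V -> V -> Prop).
Hypotheses (Hac : acyclic G) (Hdom : dominated G) (HN : bounded_paths N)
  (HR : open_bisimulation G R).

(* Domination puts both binders on the common trace, and they sit at the same depth. *)
Lemma open_bisimilar_idx r r' t x y l l' k :
  is_root G r -> is_root G r' -> R r r' -> path G r t x -> path G r' t y ->
  G x = BVar A l -> G y = BVar A l' -> idx G l r t k -> idx G l' r' t k.
Proof.
  destruct HR as [_ [Hh [Hp Hvc]]].
  intros Hr Hr' Hrr' Hx Hy Ex Ey Hi.
  pose proof (Hvc _ _ _ _ (propagated_same_trace Hp Hrr' Hx Hy) Ex Ey) as Hll'.
  destruct (crosses_suffix (Hdom Ex Hr Hx)) as [e1 [s [E1 Hl]]].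
  destruct (crosses_suffix (Hdom Ey Hr' Hy)) as [e2 [s2 [E2 Hl']]].
  rewrite <- (binder_suffix_eq HN Hh Hp Hrr' Hx Hy E1 E2 Hl Hl' Hll') in Hl'.
  apply (idx_transfer Hi Hy); [| exact (same_abs_bvar Hx Hy Ex Ey)].
  intros s' e E; rewrite E1 in E.
  split; intros Hs'.
  - now rewrite (path_suffix_unique Hac Hl Hs' E).
  - now rewrite (path_suffix_unique Hac Hl' Hs' E).
Qed.

Lemma open_bisimilar_readback_path r r' t x y tm :
  is_root G r -> is_root G r' -> R r r' ->
  readback_path G r t x tm -> path G r t x -> path G r' t y -> readback_path G r' t y tm.
Proof.
  destruct HR as [Hopen [Hh [Hp _]]].
  intros Hr Hr' Hrr' Hrb; revert y.
  induction Hrb as [t x l k Ex Hk | t x a Ex | t x b t1 Ex Hb IH | t x n1 n2 t1 t2 Ex H1 IH1 H2 IH2];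
    intros y Hx Hy; pose proof (Hh _ _ (propagated_same_trace Hp Hrr' Hx Hy)) as Hxy;
    unfold homogeneous_nodes in Hxy; rewrite Ex in Hxy; destruct (G y) eqn:Ey; try contradiction.
  - eapply rb_var; [exact Ey | exact (open_bisimilar_idx Hr Hr' Hrr' Hx Hy Ex Ey Hk)].
  - rewrite <- (Hopen _ _ _ _ Ex Ey (propagated_same_trace Hp Hrr' Hx Hy)).
    eapply rb_fv; exact Ex.
  - eapply rb_abs; [exact Ey |]. apply IH; eapply path_abs; eauto.
  - eapply rb_app; [exact Ey | apply IH1 | apply IH2];
      solve [eapply path_appl; eauto | eapply path_appr; eauto].
Qed.

End OpenBisimulationReadback.

Lemma readback_path_homogeneous r r' t t' x y tm :
  readback_path G r t x tm -> readback_path G r' t' y tm -> homogeneous_nodes G x y.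
Proof.
  intros Hx Hy; unfold homogeneous_nodes.
  destruct Hx as [? ? ? ? Ex | ? ? ? Ex | ? ? ? ? Ex | ? ? ? ? ? ? Ex];
    apply readback_path_inv in Hy; rewrite Ex;
    destruct (G y); try exact I; firstorder discriminate.
Qed.

Lemma propagation_common_readback Q :
  (forall n m, Q n m -> exists tm, readback G n tm /\ readback G m tm) ->
  forall n m, propagation G Q n m -> exists r r' t tm, Q r r' /\ path G r t n /\
    path G r' t m /\ readback_path G r t n tm /\ readback_path G r' t m tm.
Proof.
  intros HQ n m Hnm.
  induction Hnm as [n m Hnm | n m n1 n2 m1 m2 _ IH En Em | n m n1 n2 m1 m2 _ IH En Em
                   | n m b c _ IH En Em].
  - destruct (HQ _ _ Hnm) as [tm [Hn Hm]]. exists n, m, [], tm; repeat split; auto; constructor.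
  - destruct IH as [r [r' [t [tm [Hrr' [Pn [Pm [Rn Rm]]]]]]]].
    apply readback_path_inv in Rn, Rm. rewrite En in Rn. rewrite Em in Rm.
    destruct Rn as [a1 [a2 [-> [Rn _]]]], Rm as [b1 [b2 [E [Rm _]]]]. injection E as <- <-.
    exists r, r', (DL :: t), a1; repeat split; auto; eapply path_appl; eauto.
  - destruct IH as [r [r' [t [tm [Hrr' [Pn [Pm [Rn Rm]]]]]]]].
    apply readback_path_inv in Rn, Rm. rewrite En in Rn. rewrite Em in Rm.
    destruct Rn as [a1 [a2 [-> [_ Rn]]]], Rm as [b1 [b2 [E [_ Rm]]]]. injection E as <- <-.
    exists r, r', (DR :: t), a2; repeat split; auto; eapply path_appr; eauto.
  - destruct IH as [r [r' [t [tm [Hrr' [Pn [Pm [Rn Rm]]]]]]]].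
    apply readback_path_inv in Rn, Rm. rewrite En in Rn. rewrite Em in Rm.
    destruct Rn as [a1 [-> Rn]], Rm as [b1 [E Rm]]. injection E as <-.
    exists r, r', (DD :: t), a1; repeat split; auto; eapply path_abs; eauto.
Qed.

Lemma readback_open_bisimulation Q :
  pre_lambda_graph G ->
  (forall n m, Q n m -> exists tm, readback G n tm /\ readback G m tm) ->
  open_bisimulation G (propagation G Q).
Proof.
  intros [Hfv Hbv] HQ.
  pose proof (propagation_common_readback HQ) as Hwit.
  repeat split; [| | apply propagation_propagated ..|].
  - intros n m a b En Em Hnm.
    destruct (Hwit _ _ Hnm) as [r [r' [t [tm [_ [_ [_ [Rn Rm]]]]]]]].
    apply readback_path_inv in Rn, Rm. rewrite En in Rn. rewrite Em in Rm. subst.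
    injection Rm as ->. eauto.
  - intros n m Hnm.
    destruct (Hwit _ _ Hnm) as [r [r' [t [tm [_ [_ [_ [Rn Rm]]]]]]]].
    exact (readback_path_homogeneous Rn Rm).
  - intros n m l l' Hnm En Em.
    destruct (Hwit _ _ Hnm) as [r [r' [t [tm [Hrr' [Pn [Pm [Rn Rm]]]]]]]].
    apply readback_path_inv in Rn, Rm. rewrite En in Rn. rewrite Em in Rm.
    destruct Rn as [k [-> In]], Rm as [k' [E Im]]. injection E as <-.
    destruct (idx_match (Hbv _ _ En) (Hbv _ _ Em) In Im (same_abs_bvar Pn Pm En Em))
      as [s [Hl Hl']].
    exact (propagated_same_trace (propagation_propagated Q) (prop_base G Q _ _ Hrr') Hl Hl').
Qed.

End LambdaGraphTheory.

Theorem mainTheorem19 (A V : Type) (G : V -> node A V) (Q : V -> V -> Prop) :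
  lambda_graph G -> query G Q ->
  (open_bisimulation G (propagation G Q) <->
   forall n m, Q n m -> exists t : term A, readback G n t /\ readback G m t).
Proof.
  intros [Hpre [[nodes Hnodes] [Hac Hdom]]] HQ.
  pose proof (acyclic_bounded_paths Hac Hnodes) as HN.
  split; [| apply (readback_open_bisimulation Hpre)].
  intros Hbis n m Hnm.
  destruct (HQ _ _ Hnm) as [Hn Hm].
  destruct (readback_path_exists HN Hdom Hn (path_nil G n)) as [tm Htm].
  exists tm; split; [exact Htm |].
  exact (open_bisimilar_readback_path Hac Hdom HN Hbis Hn Hm (prop_base G Q _ _ Hnm) Htm
           (path_nil G n) (path_nil G m)).
Qed.
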